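(* Let $a,b,c,n,m,p,q,r$ be integers all strictly greater than $1$, and let $$M=\begin{pmatrix} 1 & a & b\\ c & n & m\\ p & q & r\end{pmatrix}.$$ If $n=ac+1$, $r=bp+1$, $m=bc$ and $q=ap$, then $\mathrm{Cat}(M)\neq\emptyset$.
   Context: For an $n\times n$ matrix $M=(m_{ij})$ with entries in the natural numbers, $\mathrm{Cat}(M)$ denotes the collection of categories $A$ with exactly $n$ distinct objects $x_1,\dots,x_n$ such that $|A(x_i,x_j)|=m_{ij}$ for all $i,j$, where $A(x_i,x_j)$ is the set of morphisms from $x_i$ to $x_j$. *)

From mathcomp Require Import all_boot all_algebra.
Set Implicit Arguments. Unset Strict Implicit. Unset Printing Implicit Defensive.

(* A (small) category whose objects are exactly the n distinct objects
   x_0, ..., x_{n-1} (indexed by 'I_n), with finite hom-sets. *)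
Record category_on (N : nat) := CategoryOn {
  hom : 'I_N -> 'I_N -> finType;
  idm : forall i : 'I_N, hom i i;
  comp : forall i j k : 'I_N, hom j k -> hom i j -> hom i k;
  comp_id_l : forall (i j : 'I_N) (f : hom i j), comp (idm j) f = f;
  comp_id_r : forall (i j : 'I_N) (f : hom i j), comp f (idm i) = f;
  comp_assoc : forall (i j k l : 'I_N) (h : hom k l) (g : hom j k) (f : hom i j),
      comp h (comp g f) = comp (comp h g) f
}.

Definition in_Cat (N : nat) (M : 'M[nat]_N) (A : category_on N) : Prop :=
  forall i j : 'I_N, #|hom A i j| = M i j.

Definition Cat_nonempty (N : nat) (M : 'M[nat]_N) : Prop :=
  exists A : category_on N, in_Cat M A.

Definition mx3 (x00 x01 x02 x10 x11 x12 x20 x21 x22 : nat) : 'M[nat]_3 :=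
  \matrix_(i < 3, j < 3)
    nth 0 (nth [::] [:: [:: x00; x01; x02]; [:: x10; x11; x12]; [:: x20; x21; x22]] i) j.

From mathcomp Require Import all_boot all_algebra.
Set Implicit Arguments. Unset Strict Implicit. Unset Printing Implicit Defensive.

(* Take a distinguished object o with End(o) trivial, and let every arrow
   i -> j that is not an identity factor uniquely through o: it is a pair
   (u, v) of an arrow u : i -> o (U i choices) and an arrow v : o -> j
   (V j choices).  Composition (u', v') \o (u, v) = (u, v') makes this a
   category with |A(i, j)| = V j * U i + [i = j <> o].  For the matrix of
   the theorem take o = x_1, U = (1, c, p) and V = (1, a, b). *)

Lemma card_ord_lt (K U : nat) : U <= K -> #|[pred u : 'I_K | u < U]| = U.
Proof.
move=> le_UK; have inj_widen : injective (widen_ord le_UK).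
  by move=> x y /(congr1 val) /= /val_inj.
rewrite -[RHS]card_ord -(card_image inj_widen); apply: eq_card => u.
rewrite inE; apply/idP/imageP => [lt_uU|[v _ ->]] /=; last exact: ltn_ord.
by exists (Ordinal lt_uU) => //; apply/val_inj.
Qed.

Lemma card_option_pred (T : finType) (P : pred (option T)) :
  #|[pred x | P x]| = P None + #|[pred y | P (Some y)]|.
Proof.
rewrite (cardD1 None) inE; congr (_ + _).
have inj_Some : injective (@Some T) by move=> x y [].
rewrite -(card_image inj_Some); apply: eq_card => x.
rewrite !inE; apply/idP/imageP => [/andP[x_some Px]|[y Py ->]] //.
by case: x x_some Px => // y _ Py; exists y.
Qed.

Definition factor_mx (N : nat) (o : 'I_N) (U V : 'I_N -> nat) : 'M[nat]_N :=
  \matrix_(i, j) (V j * U i + ((i == j) && (i != o))).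

Section FactorCategory.

Variables (N k : nat) (o : 'I_N) (U V : 'I_N -> nat).
Hypotheses (Uo : U o = 1) (Vo : V o = 1).

(* The factorisations are indexed inside 'I_k.+1 so that all hom-sets live
   in one type; None stands for the identity of an object other than o. *)
Local Notation arrow := (option ('I_k.+1 * 'I_k.+1)).

Definition factor_arrow (i j : 'I_N) (x : arrow) : bool :=
  if x is Some (u, v) then (u < U i) && (v < V j) else (i == j) && (i != o).

Definition factor_hom (i j : 'I_N) : finType := {x : arrow | factor_arrow i j x}.

Definition factor_mul (g f : arrow) : arrow :=
  match f, g with
  | None, _ => g
  | _, None => f
  | Some (u, _), Some (_, v) => Some (u, v)
  end.

Definition factor_unit (i : 'I_N) : arrow :=
  if i == o then Some (ord0, ord0) else None.

Lemma factor_arrow_unit i : factor_arrow i i (factor_unit i).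
Proof.
rewrite /factor_unit; case: eqP => [->|/eqP i_neq_o] /=; last by rewrite eqxx.
by rewrite Uo Vo.
Qed.

Lemma factor_arrow_mul i j l g f :
  factor_arrow j l g -> factor_arrow i j f -> factor_arrow i l (factor_mul g f).
Proof.
case: f => [[u1 v1]|]; case: g => [[u2 v2]|] //=.
- by move=> /andP[_ ->] /andP[-> _].
- by case/andP=> /eqP <- _.
- by move=> fg /andP[/eqP -> _].
- by move=> /andP[/eqP <- _] /andP[/eqP -> ->]; rewrite eqxx.
Qed.

Definition factor_id (i : 'I_N) : factor_hom i i :=
  exist _ (factor_unit i) (factor_arrow_unit i).

Definition factor_comp (i j l : 'I_N) (g : factor_hom j l) (f : factor_hom i j) :
  factor_hom i l :=
  exist _ (factor_mul (val g) (val f)) (factor_arrow_mul (valP g) (valP f)).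

(* At o the identity is the pair (0, 0); the bounds U o = V o = 1 force it. *)
Lemma factor_comp_id_l i j (f : factor_hom i j) : factor_comp (factor_id j) f = f.
Proof.
apply/val_inj; case: f => [[[u v]|] /= fP]; rewrite /factor_unit.
- case: eqP => [j_o|] //=; subst j; congr (Some (_, _)); apply/val_inj.
  by move: fP => /andP[_]; rewrite Vo; case: v => [[|]].
- by case/andP: fP => /eqP <- /negbTE ->.
Qed.

Lemma factor_comp_id_r i j (f : factor_hom i j) : factor_comp f (factor_id i) = f.
Proof.
apply/val_inj; case: f => [[[u v]|] /= fP]; rewrite /factor_unit.
- case: eqP => [i_o|] //=; subst i; congr (Some (_, _)); apply/val_inj.
  by move: fP => /andP[]; rewrite Uo; case: u => [[|]].
- by case/andP: fP => /eqP -> /negbTE ->.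
Qed.

Lemma factor_comp_assoc i j l s (h : factor_hom l s) (g : factor_hom j l)
    (f : factor_hom i j) :
  factor_comp h (factor_comp g f) = factor_comp (factor_comp h g) f.
Proof.
apply/val_inj => /=.
by case: (val f) => [[? ?]|]; case: (val g) => [[? ?]|]; case: (val h) => [[? ?]|].
Qed.

Definition factor_category : category_on N :=
  CategoryOn factor_comp_id_l factor_comp_id_r factor_comp_assoc.

Hypotheses (U_le : forall i, U i <= k.+1) (V_le : forall i, V i <= k.+1).

Lemma factor_category_in_Cat : in_Cat (factor_mx o U V) factor_category.
Proof.
move=> i j; rewrite /= card_sig card_option_pred mxE addnC /=; congr (_ + _).
transitivity #|[predX [pred u : 'I_k.+1 | u < U i] & [pred v : 'I_k.+1 | v < V j]]|.
  by apply: eq_card => -[u v]; rewrite !inE.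
by rewrite cardX !card_ord_lt // mulnC.
Qed.

End FactorCategory.

Lemma factor_Cat_nonempty N (o : 'I_N) (U V : 'I_N -> nat) :
  U o = 1 -> V o = 1 -> Cat_nonempty (factor_mx o U V).
Proof.
move=> Uo Vo; pose k := \max_i (U i + V i).
have UV_le i : U i + V i <= k.+1 by apply: leqW; apply: leq_bigmax.
exists (factor_category k Uo Vo).
apply: factor_category_in_Cat => i; apply: leq_trans (UV_le i).
  exact: leq_addr.
exact: leq_addl.
Qed.

Theorem mainTheorem4 (a b c n m p q r : nat) :
  1 < a -> 1 < b -> 1 < c -> 1 < n -> 1 < m -> 1 < p -> 1 < q -> 1 < r ->
  n = a * c + 1 -> r = b * p + 1 -> m = b * c -> q = a * p ->
  Cat_nonempty (mx3 1 a b c n m p q r).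
Proof.
move=> _ _ _ _ _ _ _ _ -> -> -> ->.
pose U (i : 'I_3) := nth 0 [:: 1; c; p] i.
pose V (i : 'I_3) := nth 0 [:: 1; a; b] i.
have -> : mx3 1 a b c (a * c + 1) (b * c) p (a * p) (b * p + 1) = factor_mx ord0 U V.
  apply/matrixP => -[[|[|[|i]]] hi] // [[|[|[|j]]] hj] //;
  by rewrite !mxE /U /V /= ?addn0 ?muln1 ?mul1n.
exact: factor_Cat_nonempty.
Qed.
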